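(* Let $N$ be a society, $D$ an $N$-coalition, $\nabla$ an ES basic fusion operator satisfying (ESF-SD), (ESF-P) and (ESF-I), and $w\ne w'$ interpretations. Suppose $E_{w,w'},E_{w'}\in\mathcal E$ satisfy $[\![B(E_{w,w'})]\!]=\{w,w'\}$, $[\![B(E_{w'})]\!]=\{w'\}$, and $D$ is locally decisive for $E_{w,w'}$ against $E_{w'}$. Then for every interpretation $w''\notin\{w,w'\}$ and every $E_{w',w''}\in\mathcal E$ with $[\![B(E_{w',w''})]\!]=\{w',w''\}$, $D$ is decisive for $E_{w',w''}$ against $E_{w'}$.
   Context: Setting: epistemic space $(\mathcal E,B,\mathcal L_{\mathcal P})$ ($\mathcal E$ nonempty, $B:\mathcal E\to$ propositional formulas over finite $\mathcal P$, $|\mathcal P|\ge2$, image modulo equivalence exactly the consistent formulas; $[\![\phi]\!]$ models; $\varphi_M$ a formula with models exactly $M$); agents: well-ordered set $\mathcal S$; society: nonempty finite $N\subseteq\mathcal S$; $N$-profile $\Phi:N\to\mathcal E$, $E_i=\Phi(i)$, identified with $E_i$ if $N=\{i\}$; profiles on $\{i_1<\dots<i_n\}$, $\{j_1<\dots<j_m\}$ equivalent if $n=m$ and entries coincide position-wise. ES basic fusion operator: a map $\nabla(\Phi,E)\in\mathcal E$ with (ESF1) $B(\nabla(\Phi,E))\vdash B(E)$; (ESF2) equivalent profiles and $B(E)\equiv B(E')$ give equivalent $B(\nabla)$; (ESF3) if $B(E)\equiv B(E')\wedge B(E'')$ then $B(\nabla(\Phi,E'))\wedge B(E'')\vdash B(\nabla(\Phi,E))$;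 (ESF4) if moreover $B(\nabla(\Phi,E'))\wedge B(E'')\nvdash\bot$ then $B(\nabla(\Phi,E))\vdash B(\nabla(\Phi,E'))\wedge B(E'')$. (ESF-SD): for every agent $i$, interpretations $w_1,w_2,w_3$ and $E_{w_1,w_2},E_{w_2,w_3}$ with $[\![B(E_{w_1,w_2})]\!]=\{w_1,w_2\}$, $[\![B(E_{w_2,w_3})]\!]=\{w_2,w_3\}$, there exist $i$-profiles realising each of: (i) $B(\nabla(E_i,E_{w_1,w_2}))\equiv\varphi_{w_1,w_2}$ and $B(\nabla(E_i,E_{w_2,w_3}))\equiv\varphi_{w_2,w_3}$; (ii) $\equiv\varphi_{w_1,w_2}$ and $\equiv\varphi_{w_2}$; (iii) $\equiv\varphi_{w_1}$ and $\equiv\varphi_{w_2,w_3}$; (iv) $\equiv\varphi_{w_1}$ and $\equiv\varphi_{w_2}$. (ESF-P): for every $N$, $N$-profile $\Phi$, $E,E'$: if $\bigwedge_{i\in N}B(\nabla(E_i,E))\nvdash\bot$ and $B(\nabla(E_i,E))\wedge B(E')\vdash\bot$ for all $i\in N$ then $B(\nabla(\Phi,E))\wedge B(E')\vdash\bot$. (ESF-I): for every $N$, $N$-profiles $\Phi,\Phi'$, $E$: if for every $E'$ with $B(E')\vdash B(E)$, $B(\nabla(E_j,E'))\equiv B(\nabla(E'_j,E'))$ for all $j\in N$, then $B(\nabla(\Phi,E))\equiv B(\nabla(\Phi',E))$. An $N$-coalition is a subset $D\subseteq N$. $D$ is locally decisive for $E$ against $E'$ if for every $N$-profile $\Phi$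 with (i) $B(\nabla(E_i,E))\wedge B(E')\vdash\bot$ for all $i\in D$, (ii) $B(\nabla(E_j,E))\equiv B(E')$ for all $j\in N\setminus D$, (iii) $\bigwedge_{i\in D}B(\nabla(E_i,E))\nvdash\bot$, we have $B(\nabla(\Phi,E))\wedge B(E')\vdash\bot$. $D$ is decisive for $E$ against $E'$ if the same conclusion holds for every $N$-profile satisfying only (i) and (iii). *)

From mathcomp Require Import all_boot.
Set Implicit Arguments. Unset Strict Implicit. Unset Printing Implicit Defensive.

Inductive form (P : Type) : Type :=
| FVar of P
| FTop
| FBot
| FNeg of form P
| FAnd of form P & form P
| FOr of form P & form P
| FImp of form P & form P.
Arguments FTop {P}. Arguments FBot {P}.

Definition interp (P : finType) := {ffun P -> bool}.

Fixpoint eval (P : finType) (w : interp P) (f : form P) : bool :=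
  match f with
  | FVar p => w p
  | FTop => true
  | FBot => false
  | FNeg g => ~~ eval w g
  | FAnd g h => eval w g && eval w h
  | FOr g h => eval w g || eval w h
  | FImp g h => eval w g ==> eval w h
  end.

Definition models (P : finType) (f : form P) : {set interp P} :=
  [set w | eval w f].

Definition entails (P : finType) (f g : form P) : Prop := models f \subset models g.
Definition equiv (P : finType) (f g : form P) : Prop := models f = models g.
Definition consistent (P : finType) (f : form P) : Prop := ~ entails f FBot.

Definition bigAnd (P : finType) (s : seq (form P)) : form P := foldr (@FAnd P) FTop s.

Definition epistemic_space (P : finType) (E : Type) (B : E -> form P) : Prop :=
  inhabited E /\
  (forall e, consistent (B e)) /\
  (forall f : form P, consistent f -> exists e, equiv (B e) f).

Definition strict_well_order (S : Type) (lt : S -> S -> bool) : Prop :=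
  (forall x, ~~ lt x x) /\
  (forall x y z, lt x y -> lt y z -> lt x z) /\
  (forall x y, x <> y -> lt x y \/ lt y x) /\
  well_founded (fun x y => lt x y).

(* A society is a nonempty finite set of agents, represented as the list of its
   members in increasing order {i_1 < ... < i_n}. *)
Definition society (S : eqType) (lt : rel S) (N : seq S) : Prop :=
  N <> [::] /\ sorted lt N.

(* An N-profile is represented by a function Phi : S -> E, of which only the
   values on N matter.  The profile on {i} with entry Phi i is  nab [:: i] Phi.
   Two profiles (N,Phi), (N',Phi') are equivalent iff  map Phi N = map Phi' N'
   (same size and position-wise equal entries). *)
Section Operator.
Variables (P : finType) (E : Type) (B : E -> form P) (S : eqType) (lt : rel S).
Variable nab : seq S -> (S -> E) -> E -> E.

Definition ESF_basic : Prop :=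
  (forall N Phi e, society lt N -> entails (B (nab N Phi e)) (B e)) /\
  (forall N N' Phi Phi' e e', society lt N -> society lt N' ->
     map Phi N = map Phi' N' -> equiv (B e) (B e') ->
     equiv (B (nab N Phi e)) (B (nab N' Phi' e'))) /\
  (forall N Phi e e' e'', society lt N ->
     equiv (B e) (FAnd (B e') (B e'')) ->
     entails (FAnd (B (nab N Phi e')) (B e'')) (B (nab N Phi e))) /\
  (forall N Phi e e' e'', society lt N ->
     equiv (B e) (FAnd (B e') (B e'')) ->
     consistent (FAnd (B (nab N Phi e')) (B e'')) ->
     entails (B (nab N Phi e)) (FAnd (B (nab N Phi e')) (B e''))).

Definition ESF_SD : Prop :=
  forall (i : S) (w1 w2 w3 : interp P) (e12 e23 : E),
    w1 != w2 -> w2 != w3 -> w1 != w3 ->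
    models (B e12) = [set w1; w2] -> models (B e23) = [set w2; w3] ->
    (exists Phi : S -> E,
        models (B (nab [:: i] Phi e12)) = [set w1; w2] /\
        models (B (nab [:: i] Phi e23)) = [set w2; w3]) /\
    (exists Phi : S -> E,
        models (B (nab [:: i] Phi e12)) = [set w1; w2] /\
        models (B (nab [:: i] Phi e23)) = [set w2]) /\
    (exists Phi : S -> E,
        models (B (nab [:: i] Phi e12)) = [set w1] /\
        models (B (nab [:: i] Phi e23)) = [set w2; w3]) /\
    (exists Phi : S -> E,
        models (B (nab [:: i] Phi e12)) = [set w1] /\
        models (B (nab [:: i] Phi e23)) = [set w2]).

Definition ESF_P : Prop :=
  forall (N : seq S) (Phi : S -> E) (e e' : E), society lt N ->
    consistent (bigAnd [seq B (nab [:: i] Phi e) | i <- N]) ->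
    (forall i, i \in N -> entails (FAnd (B (nab [:: i] Phi e)) (B e')) FBot) ->
    entails (FAnd (B (nab N Phi e)) (B e')) FBot.

Definition ESF_I : Prop :=
  forall (N : seq S) (Phi Phi' : S -> E) (e : E), society lt N ->
    (forall e' : E, entails (B e') (B e) ->
       forall j, j \in N -> equiv (B (nab [:: j] Phi e')) (B (nab [:: j] Phi' e'))) ->
    equiv (B (nab N Phi e)) (B (nab N Phi' e)).

Definition locally_decisive (N D : seq S) (e e' : E) : Prop :=
  forall Phi : S -> E,
    (forall i, i \in D -> entails (FAnd (B (nab [:: i] Phi e)) (B e')) FBot) ->
    (forall j, j \in N -> j \notin D -> equiv (B (nab [:: j] Phi e)) (B e')) ->
    consistent (bigAnd [seq B (nab [:: i] Phi e) | i <- D]) ->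
    entails (FAnd (B (nab N Phi e)) (B e')) FBot.

Definition decisive (N D : seq S) (e e' : E) : Prop :=
  forall Phi : S -> E,
    (forall i, i \in D -> entails (FAnd (B (nab [:: i] Phi e)) (B e')) FBot) ->
    consistent (bigAnd [seq B (nab [:: i] Phi e) | i <- D]) ->
    entails (FAnd (B (nab N Phi e)) (B e')) FBot.
End Operator.

(* Fix a profile Phi in which every member of D rejects w' on the issue {w', w''}.  Agent by
   agent, (ESF-SD) and the rationality postulates (ESF3)/(ESF4) give a profile Phi' that agrees
   with Phi on {w', w''} and all its sub-issues, selects w'' on {w, w''} for everybody, and on
   {w, w'} selects w for the members of D and w' for the others.  Local decisiveness of D makes
   the society select w on {w, w'}, (ESF-P) makes it select w'' on {w, w''}, and fusing on the
   issue {w, w', w''} forces it to select w'' on {w', w''}.  By (ESF-I) the same holds for Phi. *)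
From Pilot Require Import Defs.
From mathcomp Require Import all_boot.
From Stdlib Require Import ClassicalEpsilon FunctionalExtensionality.
Set Implicit Arguments. Unset Strict Implicit. Unset Printing Implicit Defensive.

Lemma subset_set2 (T : finType) (A : {set T}) (a b : T) :
  A \subset [set a; b] -> A != set0 -> [\/ A = [set a], A = [set b] | A = [set a; b]].
Proof.
move=> sAab A_neq0; have sA x : x \in A -> (x == a) || (x == b).
  by move/(subsetP sAab); rewrite in_set2.
case: (boolP (a \in A)) => aA; case: (boolP (b \in A)) => bA.
- apply: Or33; apply/setP => x; rewrite in_set2.
  by apply/idP/idP => [/sA // | /orP[] /eqP ->].
- apply: Or31; apply/setP => x; rewrite in_set1; apply/idP/eqP => [xA | -> //].
  by case/orP: (sA x xA) => /eqP // xb; move: bA; rewrite -xb xA.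
- apply: Or32; apply/setP => x; rewrite in_set1; apply/idP/eqP => [xA | -> //].
  by case/orP: (sA x xA) => /eqP // xa; move: aA; rewrite -xa xA.
- case/set0Pn: A_neq0 => x xA; case/orP: (sA x xA) => /eqP xab.
  + by move: aA; rewrite -xab xA.
  + by move: bA; rewrite -xab xA.
Qed.

Section Semantics.
Variable P : finType.
Implicit Types (f g : form P) (v w : interp P) (M : {set interp P}).

Lemma models_FAnd f g : models (FAnd f g) = models f :&: models g.
Proof. by apply/setP => x; rewrite !inE. Qed.

Lemma entails_FBot f : entails f FBot <-> models f = set0.
Proof.
have models_FBot : models (@FBot P) = set0 by apply/setP => x; rewrite !inE.
by rewrite /entails models_FBot subset0; split => /eqP.
Qed.

Lemma entails_FAnd_FBot1 f g y :
  models g = [set y] -> entails (FAnd f g) FBot <-> y \notin models f.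
Proof.
move=> hg; rewrite entails_FBot models_FAnd hg -disjoints1 disjoint_sym -setI_eq0.
by split => [-> | /eqP].
Qed.

Lemma consistent_bigAnd s v : all (eval v) s -> consistent (bigAnd s).
Proof.
move=> hv /entails_FBot /setP /(_ v); rewrite !inE.
by elim: s hv => //= f s IHs /andP[-> /IHs].
Qed.

Definition form_of_interp w : form P :=
  bigAnd [seq if w p then FVar p else FNeg (FVar p) | p <- enum P].

Lemma eval_form_of_interp v w : eval v (form_of_interp w) = (v == w).
Proof.
have -> : eval v (form_of_interp w) = all (fun p => v p == w p) (enum P).
  rewrite /form_of_interp; elim: (enum P) => //= p s ->.
  by case: (w p) => /=; case: (v p).
apply/allP/idP => [hvw | /eqP -> p _ //]; apply/eqP/ffunP => p.
by apply/eqP/hvw; rewrite mem_enum.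
Qed.

Definition form_of_set M : form P :=
  foldr (fun w f => FOr (form_of_interp w) f) FBot (enum M).

Lemma models_form_of_set M : models (form_of_set M) = M.
Proof.
apply/setP => v; rewrite inE /form_of_set -mem_enum.
by elim: (enum M) => //= w s ->; rewrite eval_form_of_interp in_cons.
Qed.

End Semantics.

Section Fusion.
Variables (P : finType) (E : Type) (B : E -> form P) (S : eqType) (lt : rel S).
Variable nab : seq S -> (S -> E) -> E -> E.
Hypothesis hES : epistemic_space B.
Hypothesis h_basic : ESF_basic B lt nab.

Local Notation mods e := (models (B e)).
Implicit Types (e : E) (Phi F : S -> E) (N : seq S) (a b c x y : interp P).

Lemma mods_neq0 e : mods e != set0.
Proof.
case: hES => _ [hcons _]; apply/negP => /eqP he.
by apply: (hcons e); apply/entails_FBot.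
Qed.

Lemma exists_mods (M : {set interp P}) x : x \in M -> exists e, mods e = M.
Proof.
move=> xM; case: hES => _ [_ hB]; case: (hB (form_of_set M)).
  by move/entails_FBot/setP/(_ x); rewrite models_form_of_set xM inE.
by move=> e he; exists e; rewrite he models_form_of_set.
Qed.

Lemma society1 i : society lt [:: i].
Proof. by []. Qed.

Lemma mods_nab_sub N Phi e : society lt N -> mods (nab N Phi e) \subset mods e.
Proof. by case: h_basic => h1 _; apply: h1. Qed.

Lemma mods_nab_eq N Phi e e' :
  society lt N -> mods e = mods e' -> mods (nab N Phi e) = mods (nab N Phi e').
Proof. by case: h_basic => _ [h2 _] hN; apply: h2. Qed.

Lemma mods_nab1 N Phi e x :
  society lt N -> mods e = [set x] -> mods (nab N Phi e) = [set x].
Proof.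
move=> hN he; have := mods_nab_sub Phi e hN.
by rewrite he subset1 (negbTE (mods_neq0 _)) orbF => /eqP.
Qed.

Lemma mods_nab_notin N Phi e x y : society lt N -> mods e = [set x; y] ->
  y \notin mods (nab N Phi e) -> mods (nab N Phi e) = [set x].
Proof.
move=> hN he yR; have := mods_nab_sub Phi e hN; rewrite he.
case/subset_set2/(_ (mods_neq0 _)) => // hR; move: yR; rewrite hR.
- by rewrite in_set1 eqxx.
- by rewrite in_set2 eqxx orbT.
Qed.

Lemma mods_nab_restrict N Phi e eT : society lt N -> mods e \subset mods eT ->
  mods (nab N Phi eT) :&: mods e != set0 ->
  mods (nab N Phi e) = mods (nab N Phi eT) :&: mods e.
Proof.
move=> hN hs hne; case: h_basic => _ [_ [h3 h4]].
have he : Defs.equiv (B e) (FAnd (B eT) (B e)).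
  by rewrite /Defs.equiv models_FAnd (setIidPr hs).
apply/eqP; rewrite eqEsubset; apply/andP; split.
  have := h4 N Phi e eT e hN he; rewrite /entails models_FAnd; apply.
  by move/entails_FBot; rewrite models_FAnd => /eqP; rewrite (negbTE hne).
by have := h3 N Phi e eT e hN he; rewrite /entails models_FAnd.
Qed.

Lemma mods_nab_transitive N Phi a b c eab ebc eac :
  society lt N -> a != b -> b != c -> a != c ->
  mods eab = [set a; b] -> mods ebc = [set b; c] -> mods eac = [set a; c] ->
  mods (nab N Phi ebc) = [set b] -> a \in mods (nab N Phi eab) ->
  mods (nab N Phi eac) = [set a].
Proof.
move=> hN ab bc ac hab hbc hac rbc arab.
have [eT heT] : exists eT, mods eT = [set a; b; c].
  by apply: (exists_mods (x := a)); rewrite !inE eqxx.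
have sub (u v : interp P) : u \in [set a; b; c] -> v \in [set a; b; c] ->
    [set u; v] \subset mods eT.
  by move=> uT vT; apply/subsetP => x; rewrite heT in_set2 => /orP[] /eqP ->.
have sab : mods eab \subset mods eT by rewrite hab sub // !inE eqxx ?orbT.
have sbc : mods ebc \subset mods eT by rewrite hbc sub // !inE eqxx ?orbT.
have sac : mods eac \subset mods eT by rewrite hac sub // !inE eqxx ?orbT.
set R := mods (nab N Phi eT).
have RT : R \subset [set a; b; c] by rewrite -heT; apply: mods_nab_sub.
have cR : c \notin R.
  apply/negP => cR.
  have ne : R :&: mods ebc != set0.
    by apply/set0Pn; exists c; rewrite in_setI cR hbc in_set2 eqxx orbT.
  have := mods_nab_restrict hN sbc ne; rewrite rbc => /setP /(_ c).
  by rewrite in_setI cR hbc in_set2 in_set1 eqxx orbT eq_sym (negbTE bc).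
have aR : a \in R.
  have ne : R :&: mods eab != set0.
    case/set0Pn: (mods_neq0 (nab N Phi eT)) => x xR; apply/set0Pn; exists x.
    rewrite in_setI xR hab in_set2.
    have := subsetP RT x xR; rewrite !inE -orbA.
    case/or3P => [-> // | -> | /eqP xc]; first by rewrite orbT.
    by move: cR; rewrite -xc xR.
  by move: arab; rewrite (mods_nab_restrict hN sab ne) in_setI => /andP[].
have ne : R :&: mods eac != set0.
  by apply/set0Pn; exists a; rewrite in_setI aR hac in_set2 eqxx.
rewrite (mods_nab_restrict hN sac ne) hac; apply/setP => x.
rewrite in_setI in_set2 in_set1; case: eqP => [-> | _]; first by rewrite aR.
by case: eqP => [-> | _]; rewrite ?(negbTE cR) ?andbF.
Qed.

Lemma mods_nab_pair_agree N F1 F2 a b e e' :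
  society lt N -> mods e = [set a; b] ->
  mods (nab N F1 e) = mods (nab N F2 e) -> mods e' \subset mods e ->
  mods (nab N F1 e') = mods (nab N F2 e').
Proof.
move=> hN he agree; rewrite he => /subset_set2 /(_ (mods_neq0 e')) [] he'.
- by rewrite !(mods_nab1 _ hN he').
- by rewrite !(mods_nab1 _ hN he').
- by rewrite -he in he'; rewrite !(mods_nab_eq _ hN he').
Qed.

(* By (ESF2) an individual outcome depends only on the agent's own entry. *)
Lemma agentwise_profile (Q : S -> (E -> {set interp P}) -> Prop) :
  (forall i, exists F, Q i (fun e => mods (nab [:: i] F e))) ->
  exists Phi, forall i, Q i (fun e => mods (nab [:: i] Phi e)).
Proof.
move=> hQ; pose G i := proj1_sig (constructive_indefinite_description _ (hQ i)).
exists (fun i => G i i) => i.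
have -> : (fun e => mods (nab [:: i] (fun j => G j j) e)) =
          (fun e => mods (nab [:: i] (G i) e)).
  by apply: functional_extensionality => e; case: h_basic => _ [h2 _]; apply: h2.
exact: proj2_sig (constructive_indefinite_description _ (hQ i)).
Qed.

Lemma locally_decisive_pair N D Phi e ey x y :
  society lt N -> locally_decisive B nab N D e ey -> x != y ->
  mods e = [set x; y] -> mods ey = [set y] ->
  (forall i, i \in D -> mods (nab [:: i] Phi e) = [set x]) ->
  (forall j, j \in N -> j \notin D -> mods (nab [:: j] Phi e) = [set y]) ->
  mods (nab N Phi e) = [set x].
Proof.
move=> hN hloc xy he hey hD hND; apply: (mods_nab_notin hN he).
apply/(entails_FAnd_FBot1 _ hey); apply: hloc.
- by move=> i iD; apply/(entails_FAnd_FBot1 _ hey); rewrite hD // in_set1 eq_sym.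
- by move=> j jN jD; rewrite /Defs.equiv hey hND.
- apply: (consistent_bigAnd (v := x)); rewrite all_map; apply/allP => i iD /=.
  by have := set11 x; rewrite -(hD i iD) inE.
Qed.

Section Pareto.
Hypothesis h_P : ESF_P B lt nab.

Lemma pareto_pair N Phi e x y :
  society lt N -> x != y -> mods e = [set x; y] ->
  (forall i, i \in N -> mods (nab [:: i] Phi e) = [set x]) ->
  mods (nab N Phi e) = [set x].
Proof.
move=> hN xy he hi; have [ey hey] := exists_mods (set11 y).
apply: (mods_nab_notin hN he); apply/(entails_FAnd_FBot1 _ hey); apply: h_P => //.
- apply: (consistent_bigAnd (v := x)); rewrite all_map; apply/allP => i iN /=.
  by have := set11 x; rewrite -(hi i iN) inE.
- by move=> i iN; apply/(entails_FAnd_FBot1 _ hey); rewrite hi // in_set1 eq_sym.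
Qed.

End Pareto.

Section SocialDiversity.
Hypothesis h_SD : ESF_SD B nab.

Lemma SD_transitive i a b c eab ebc eac (A : {set interp P}) :
  a != b -> b != c -> a != c ->
  mods eab = [set a; b] -> mods ebc = [set b; c] -> mods eac = [set a; c] ->
  A = [set a] \/ A = [set a; b] ->
  exists F, [/\ mods (nab [:: i] F eab) = A, mods (nab [:: i] F ebc) = [set b]
              & mods (nab [:: i] F eac) = [set a]].
Proof.
move=> ab bc ac hab hbc hac hA.
have [_ [[F2 [hF2ab hF2bc]] [_ [F4 [hF4ab hF4bc]]]]] := h_SD i ab bc ac hab hbc.
have trans F : mods (nab [:: i] F ebc) = [set b] -> a \in mods (nab [:: i] F eab) ->
    mods (nab [:: i] F eac) = [set a].
  exact: mods_nab_transitive (society1 i) ab bc ac hab hbc hac.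
case: hA => ->; [exists F4 | exists F2]; split=> //; apply: trans => //.
- by rewrite hF4ab set11.
- by rewrite hF2ab setU11.
Qed.

Lemma agent_profile i Phi (inD : bool) w w' w'' e1 e2 e3 :
  w != w' -> w' != w'' -> w != w'' ->
  mods e1 = [set w'; w''] -> mods e2 = [set w; w''] -> mods e3 = [set w; w'] ->
  (inD -> w' \notin mods (nab [:: i] Phi e1)) ->
  exists F, [/\ mods (nab [:: i] F e1) = mods (nab [:: i] Phi e1),
                mods (nab [:: i] F e2) = [set w'']
              & mods (nab [:: i] F e3) = if inD then [set w] else [set w']].
Proof.
move=> ww' w'w'' ww'' he1 he2 he3 hrej.
have [w'w w''w w''w'] : [/\ w' != w, w'' != w & w'' != w'] by split; rewrite eq_sym.
have he1C : mods e1 = [set w''; w'] by rewrite setUC.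
have he2C : mods e2 = [set w''; w] by rewrite setUC.
have he3C : mods e3 = [set w'; w] by rewrite setUC.
case: inD hrej => [/(_ isT) w'X | _].
  rewrite (mods_nab_notin (society1 i) he1C w'X).
  have [F [? ? ?]] := SD_transitive i w''w ww' w''w' he2C he3 he1C (or_introl erefl).
  by exists F.
have := mods_nab_sub Phi e1 (society1 i); rewrite he1.
case/subset_set2/(_ (mods_neq0 _)) => ->.
- exact: (SD_transitive i w'w'' w''w w'w he1 he2C he3C (or_introl erefl)).
- have [F [? ? ?]] := SD_transitive i w''w' w'w w''w he1C he3C he2C (or_introl erefl).
  by exists F.
- exact: (SD_transitive i w'w'' w''w w'w he1 he2C he3C (or_intror erefl)).
Qed.

End SocialDiversity.
End Fusion.

Theorem proposition15
  (P : finType) (hP : 1 < #|P|)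
  (E : Type) (B : E -> form P) (hES : epistemic_space B)
  (S : eqType) (lt : rel S) (hS : strict_well_order lt)
  (nab : seq S -> (S -> E) -> E -> E)
  (h_basic : ESF_basic B lt nab) (h_SD : ESF_SD B nab)
  (h_P : ESF_P B lt nab) (h_I : ESF_I B lt nab)
  (N D : seq S) (hN : society lt N) (hD : {subset D <= N})
  (w w' : interp P) (hww' : w != w')
  (Eww' Ew' : E)
  (hEww' : models (B Eww') = [set w; w'])
  (hEw' : models (B Ew') = [set w'])
  (hloc : locally_decisive B nab N D Eww' Ew') :
  forall (w'' : interp P), w'' \notin [set w; w'] ->
  forall Ew'w'' : E, models (B Ew'w'') = [set w'; w''] ->
  decisive B nab N D Ew'w'' Ew'.
Proof.
move=> w'' hw'' Ew'w'' hEw'w'' Phi hD_reject _.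
have [w''w w''w'] : w'' != w /\ w'' != w'.
  by move: hw''; rewrite !inE negb_or => /andP[].
have [ww'' w'w''] : w != w'' /\ w' != w'' by rewrite !(eq_sym _ w'').
have [Eww'' hEww''] := exists_mods hES (setU11 w [set w'']).
have hEww''C : models (B Eww'') = [set w''; w] by rewrite setUC.
have hEw'w''C : models (B Ew'w'') = [set w''; w'] by rewrite setUC.
pose Good i (r : E -> {set interp P}) :=
  [/\ r Ew'w'' = models (B (nab [:: i] Phi Ew'w'')), r Eww'' = [set w'']
    & r Eww' = if i \in D then [set w] else [set w']].
have [Phi' hPhi'] : exists Phi', forall i, Good i (fun e => models (B (nab [:: i] Phi' e))).
  apply: (agentwise_profile h_basic) => i.
  have [|F hF] := agent_profile hES h_basic h_SD (i := i) (Phi := Phi) (inD := i \in D)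
                    hww' w'w'' ww'' hEw'w'' hEww'' hEww'; last by exists F.
  by move=> iD; apply/(entails_FAnd_FBot1 _ hEw')/hD_reject.
have out_ww' : models (B (nab N Phi' Eww')) = [set w].
  apply: (locally_decisive_pair hES h_basic hN hloc hww' hEww' hEw') => [i iD | j _ jD].
  - by case: (hPhi' i); rewrite iD.
  - by case: (hPhi' j); rewrite (negbTE jD).
have out_ww'' : models (B (nab N Phi' Eww'')) = [set w''].
  apply: (pareto_pair hES h_basic h_P hN w''w hEww''C).
  by move=> i _; case: (hPhi' i).
have out_w'w'' : models (B (nab N Phi' Ew'w'')) = [set w''].
  apply: (mods_nab_transitive hES h_basic hN w''w hww' w''w' hEww''C hEww' hEw'w''C out_ww').
  by rewrite out_ww'' set11.
have agree : models (B (nab N Phi Ew'w'')) = models (B (nab N Phi' Ew'w'')).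
  apply: (h_I N Phi Phi' Ew'w'' hN) => e' he' j _.
  apply: (mods_nab_pair_agree hES h_basic (society1 lt j) hEw'w'' _ he').
  by case: (hPhi' j).
by apply/(entails_FAnd_FBot1 _ hEw'); rewrite agree out_w'w'' in_set1 eq_sym.
Qed.
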